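(* Let $f_1(x)=\log(1+x^2)$ for $x\in\mathbb R$, and let $f_1^{(4)}$ denote its fourth derivative. Then \[ \int_{\mathbb R} f_1^{(4)}(x)\, f_1(x)^3\,dx<0 . \] *)

From Stdlib Require Import Reals.
From Coquelicot Require Import Coquelicot.
Open Scope R_scope.

Definition f1 (x : R) : R := ln (1 + x ^ 2).

(* Write f for f1.  Integrating by parts,
     f'''' f^3 = B' + 3 f^2 f''^2 - 2 f'^4,   B = f''' f^3 - 3 f'' f^2 f' + 2 f f'^3,
   and B vanishes at both ends since f <= 4 (1 + x^2)^(1/4) while f^(k) = O(|x|^-k).
   The quartic term has integral -2 pi.  For the square term, f <= g on [0, oo) with
   g x = x (1 + 11 x^2 + 4 x^4) / (5 (1 + x^2)^2): both vanish at 0 and g' - f' is a sum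
   of squares over 5 (1 + x^2)^3.  The rational function 3 g^2 f''^2 has an explicit
   primitive, with integral 1563/800 pi over R.  So the nondecreasing primitive of
   3 f^2 f''^2 stays bounded, has limits at both ends, and its total increase is at
   most 1563/800 pi < 2 pi. *)

From Stdlib Require Import Reals Lra Lia List Classical.
From Coquelicot Require Import Coquelicot.
Import ListNotations.
Open Scope R_scope.

Lemma nondecreasing_of_is_derive_nonneg (g g' : R -> R) :
  (forall x, is_derive g x (g' x)) -> (forall x, 0 <= g' x) ->
  forall x y, x <= y -> g x <= g y.
Proof.
  intros Hd Hpos x y Hxy.
  destruct (MVT_gen g x y g') as [c [_ Hc]].
  - intros t _; apply Hd.
  - intros t _. apply continuity_pt_filterlim, (ex_derive_continuous (V := R_NormedModule)).
    exists (g' t); apply Hd.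
  - specialize (Hpos c). nra.
Qed.

Lemma nondecreasing_is_lim_p (g : R -> R) (m : R) :
  (forall x y, x <= y -> g x <= g y) -> (forall x, g x <= m) ->
  exists l : R, is_lim g p_infty l.
Proof.
  intros Hmon Hm.
  set (E := fun y => exists x, y = g x).
  destruct (completeness E) as [L [HLub HLleast]].
  - exists m. intros y [x ->]. apply Hm.
  - exists (g 0), 0. reflexivity.
  - exists L. apply is_lim_spec. intros eps; simpl.
    destruct (classic (exists x0, L - eps < g x0)) as [[x0 Hx0]|Hnone].
    + exists x0. intros x Hx.
      assert (g x <= L) by (apply HLub; exists x; reflexivity).
      pose proof (Hmon x0 x (Rlt_le _ _ Hx)).
      apply Rabs_lt_between; split; lra.
    + exfalso.
      assert (L <= L - eps).
      { apply HLleast. intros y [x ->]. apply Rnot_lt_le. intros Hlt. apply Hnone. now exists x. }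
      pose proof (cond_pos eps). lra.
Qed.

Lemma is_lim_m_of_reflect (h : R -> R) (l : Rbar) :
  is_lim (fun x => h (- x)) p_infty l -> is_lim h m_infty l.
Proof.
  intros Hl.
  apply (is_lim_ext (fun x => h (- - x))); [intros x; now rewrite Ropp_involutive|].
  apply (is_lim_comp (fun x => h (- x)) Ropp m_infty l p_infty Hl).
  - apply (is_lim_opp (fun x => x) m_infty m_infty), is_lim_id.
  - exists 0. intros x _. discriminate.
Qed.

Lemma nondecreasing_is_lim_m (g : R -> R) (m : R) :
  (forall x y, x <= y -> g x <= g y) -> (forall x, m <= g x) ->
  exists l : R, is_lim g m_infty l.
Proof.
  intros Hmon Hm.
  destruct (nondecreasing_is_lim_p (fun x => - g (- x)) (- m)) as [l Hl].
  - intros x y Hxy. pose proof (Hmon (- y) (- x) ltac:(lra)). lra.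
  - intros x. pose proof (Hm (- x)). lra.
  - exists (- l). apply is_lim_m_of_reflect.
    apply (is_lim_ext (fun x => - (- g (- x)))); [intros x; ring|].
    apply (is_lim_opp _ _ l Hl).
Qed.

Lemma nondecreasing_is_lim_le (h : R -> R) (lm lp : R) :
  (forall x y, x <= y -> h x <= h y) ->
  is_lim h m_infty lm -> is_lim h p_infty lp -> lm <= lp.
Proof.
  intros Hmon Hm Hp.
  assert (Hlm : Rbar_le lm (h 0)).
  { apply (is_lim_le_loc h (fun _ => h 0) m_infty); [|exact Hm|apply is_lim_const].
    exists 0. intros x Hx. apply Hmon. lra. }
  assert (Hlp : Rbar_le (h 0) lp).
  { apply (is_lim_le_loc (fun _ => h 0) h p_infty); [|apply is_lim_const|exact Hp].
    exists 0. intros x Hx. apply Hmon. lra. }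
  simpl in Hlm, Hlp. lra.
Qed.

Lemma is_lim_atan_p : is_lim atan p_infty (PI / 2).
Proof.
  apply is_lim_spec. intros eps; simpl.
  pose proof PI_RGT_0.
  set (e := Rmin eps (PI / 2)).
  assert (0 < e) by (apply Rmin_pos; [apply cond_pos|lra]).
  assert (e <= PI / 2) by apply Rmin_r.
  assert (e <= eps) by apply Rmin_l.
  exists (tan (PI / 2 - e)). intros x Hx.
  apply atan_increasing in Hx. rewrite atan_tan in Hx by lra.
  pose proof (atan_bound x).
  apply Rabs_lt_between; split; lra.
Qed.

Lemma is_lim_atan_m : is_lim atan m_infty (- (PI / 2)).
Proof.
  apply is_lim_m_of_reflect.
  apply (is_lim_ext (fun x => - atan x)); [intros x; now rewrite atan_opp|].
  apply (is_lim_opp atan p_infty (PI / 2)), is_lim_atan_p.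
Qed.

Definition root4 (y : R) : R := sqrt (sqrt y).

Lemma root4_ge_1 y : 1 <= y -> 1 <= root4 y.
Proof.
  intros Hy. unfold root4.
  assert (1 <= sqrt y) by (rewrite <- sqrt_1; now apply sqrt_le_1_alt).
  rewrite <- sqrt_1. now apply sqrt_le_1_alt.
Qed.

Lemma root4_pow4 y : 0 <= y -> root4 y ^ 4 = y.
Proof.
  intros Hy. unfold root4.
  replace (sqrt (sqrt y) ^ 4) with ((sqrt (sqrt y) * sqrt (sqrt y)) ^ 2) by ring.
  rewrite sqrt_sqrt by apply sqrt_pos.
  now rewrite pow2_sqrt.
Qed.

Lemma abs_le_root4_sq x : Rabs x <= root4 (1 + x ^ 2) ^ 2.
Proof.
  pose proof (root4_pow4 (1 + x ^ 2) ltac:(nra)).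
  pose proof (root4_ge_1 (1 + x ^ 2) ltac:(nra)).
  apply Rsqr_incr_0_var; [|nra]. unfold Rsqr.
  rewrite <- Rabs_mult, Rabs_pos_eq by nra. nra.
Qed.

Lemma is_lim_inv_root4 (g : R -> R) (x : Rbar) :
  is_lim g x p_infty -> is_lim (fun y => / root4 (g y)) x 0.
Proof.
  intros Hg. apply (is_lim_inv (fun y => root4 (g y)) x p_infty); [|discriminate].
  now apply is_lim_sqrt_p, is_lim_sqrt_p.
Qed.

Lemma is_lim_0_of_le_inv_root4 (h : R -> R) (C : R) :
  (forall x, Rabs (h x) <= C / root4 (1 + x ^ 2)) ->
  is_lim h p_infty 0 /\ is_lim h m_infty 0.
Proof.
  intros Hh.
  assert (Hsq : forall x : Rbar, is_lim (fun y => 1 + y ^ 2) x p_infty -> is_lim h x 0).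
  { intros x Hu.
    assert (HC : is_lim (fun y => C * / root4 (1 + y ^ 2)) x 0).
    { replace (Finite 0) with (Rbar_mult C 0) by (simpl; f_equal; ring).
      now apply is_lim_scal_l, is_lim_inv_root4. }
    apply (is_lim_le_le_loc (fun y => - (C * / root4 (1 + y ^ 2)))
                            (fun y => C * / root4 (1 + y ^ 2))).
    - apply filter_forall. intros y. apply Rabs_le_between, Hh.
    - replace (Finite 0) with (Rbar_opp 0) by (simpl; f_equal; ring).
      now apply is_lim_opp.
    - exact HC. }
  split; apply Hsq.
  - apply (is_lim_le_p_loc (fun y => y)); [|apply is_lim_id].
    exists 0. intros y _. nra.
  - apply (is_lim_le_p_loc (fun y => - y)).
    + exists 0. intros y _. nra.
    + apply (is_lim_opp (fun y => y) m_infty m_infty), is_lim_id.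
Qed.

Fixpoint horner (l : list R) (y : R) : R :=
  match l with
  | [] => 0
  | c :: l' => c + y * horner l' y
  end.

Lemma horner_bound (l : list R) (b y : R) :
  Rabs y <= 1 -> List.Forall (fun c => Rabs c <= b) l ->
  Rabs (horner l y) <= INR (length l) * b.
Proof.
  intros Hy Hl. induction Hl as [|c l Hc _ IH]; simpl horner.
  - rewrite Rabs_R0. simpl. lra.
  - change (length (c :: l)) with (S (length l)). rewrite S_INR.
    eapply Rle_trans; [apply Rabs_triang|]. rewrite Rabs_mult.
    pose proof (Rabs_pos y). pose proof (Rabs_pos (horner l y)). nra.
Qed.

(* Every odd rational function x P(x^2) / (1 + x^2)^(n+1) with deg P <= n has this form,
   which makes its decay at both ends uniform in the coefficients. *)
Definition odd_rat (l : list R) (x : R) : R := x / (1 + x ^ 2) * horner l (/ (1 + x ^ 2)).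

Lemma odd_rat_bound (l : list R) (b x : R) :
  List.Forall (fun c => Rabs c <= b) l ->
  Rabs (odd_rat l x) <= INR (length l) * b / root4 (1 + x ^ 2).
Proof.
  intros Hl. unfold odd_rat.
  pose proof (root4_ge_1 (1 + x ^ 2) ltac:(nra)) as Hs1.
  pose proof (root4_pow4 (1 + x ^ 2) ltac:(nra)) as Hs4.
  pose proof (abs_le_root4_sq x) as Hx.
  set (s := root4 (1 + x ^ 2)) in *.
  assert (Hu : 0 < 1 + x ^ 2) by nra.
  assert (Hw : Rabs (/ (1 + x ^ 2)) <= 1).
  { rewrite Rabs_pos_eq by (left; now apply Rinv_0_lt_compat).
    rewrite <- Rinv_1. apply Rinv_le_contravar; nra. }
  pose proof (horner_bound l b _ Hw Hl) as Hh.
  set (P := horner l (/ (1 + x ^ 2))) in *.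
  assert (Hxu : Rabs (x / (1 + x ^ 2)) * s <= 1).
  { unfold Rdiv. rewrite Rabs_mult, (Rabs_pos_eq (/ _)) by (left; now apply Rinv_0_lt_compat).
    rewrite <- Hs4. apply (Rmult_le_reg_r (s ^ 4)); [nra|].
    field_simplify; [nra|lra]. }
  rewrite Rabs_mult. unfold Rdiv.
  apply (Rmult_le_reg_r s); [lra|].
  rewrite (Rmult_assoc _ (/ s)), Rinv_l, Rmult_1_r by lra.
  pose proof (Rabs_pos (x / (1 + x ^ 2))). pose proof (Rabs_pos P). nra.
Qed.

Lemma is_lim_odd_rat (l : list R) (b : R) :
  List.Forall (fun c => Rabs c <= b) l ->
  is_lim (odd_rat l) p_infty 0 /\ is_lim (odd_rat l) m_infty 0.
Proof.
  intros Hl. apply (is_lim_0_of_le_inv_root4 _ (INR (length l) * b)).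
  intros x. now apply odd_rat_bound.
Qed.

Definition df1 (x : R) : R := 2 * x / (1 + x ^ 2).
Definition d2f1 (x : R) : R := 2 * (1 - x ^ 2) / (1 + x ^ 2) ^ 2.
Definition d3f1 (x : R) : R := 4 * x * (x ^ 2 - 3) / (1 + x ^ 2) ^ 3.
Definition d4f1 (x : R) : R := -12 * (x ^ 4 - 6 * x ^ 2 + 1) / (1 + x ^ 2) ^ 4.

Ltac pos_denominators :=
  repeat split; try apply Rgt_not_eq; try apply Rlt_gt;
  repeat (apply Rmult_lt_0_compat || apply pow_lt); try nra.

Ltac solve_derive := auto_derive; [pos_denominators | field; pos_denominators].

Ltac coefs_bounded :=
  repeat (apply List.Forall_cons; [apply Rabs_le; lra|]); apply List.Forall_nil.

Lemma is_derive_f1 x : is_derive f1 x (df1 x).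
Proof. unfold f1, df1. solve_derive. Qed.

Lemma is_derive_df1 x : is_derive df1 x (d2f1 x).
Proof. unfold df1, d2f1. solve_derive. Qed.

Lemma is_derive_d2f1 x : is_derive d2f1 x (d3f1 x).
Proof. unfold d2f1, d3f1. solve_derive. Qed.

Lemma is_derive_d3f1 x : is_derive d3f1 x (d4f1 x).
Proof. unfold d3f1, d4f1. solve_derive. Qed.

Lemma Derive_n_f1_4 x : Derive_n f1 4 x = d4f1 x.
Proof.
  assert (Hstep : forall n (g g' : R -> R), (forall y, Derive_n f1 n y = g y) ->
            (forall y, is_derive g y (g' y)) -> forall y, Derive_n f1 (S n) y = g' y).
  { intros n g g' Hn Hg y. simpl. rewrite (Derive_ext _ _ _ Hn).
    now apply is_derive_unique. }
  revert x.
  apply (Hstep 3%nat d3f1); [|apply is_derive_d3f1].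
  apply (Hstep 2%nat d2f1); [|apply is_derive_d2f1].
  apply (Hstep 1%nat df1); [|apply is_derive_df1].
  apply (Hstep 0%nat f1); [reflexivity|apply is_derive_f1].
Qed.

Definition integrand (x : R) : R := d4f1 x * f1 x ^ 3.
Definition bdry (x : R) : R :=
  d3f1 x * f1 x ^ 3 - 3 * d2f1 x * f1 x ^ 2 * df1 x + 2 * f1 x * df1 x ^ 3.
Definition sq_term (x : R) : R := 3 * f1 x ^ 2 * d2f1 x ^ 2.
Definition quartic_term (x : R) : R := -2 * df1 x ^ 4.

Lemma is_derive_bdry x : is_derive bdry x (integrand x - sq_term x - quartic_term x).
Proof.
  unfold bdry, integrand, sq_term, quartic_term, df1, d2f1, d3f1, d4f1, f1.
  auto_derive; [pos_denominators|].
  replace (1 + x * (x * 1)) with (1 + x ^ 2) by ring.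
  set (L := ln (1 + x ^ 2)). field. pos_denominators.
Qed.

Lemma continuous_integrand x : continuous integrand x.
Proof.
  apply (ex_derive_continuous (V := R_NormedModule)).
  unfold integrand, d4f1, f1. auto_derive. pos_denominators.
Qed.

Lemma f1_nonneg x : 0 <= f1 x.
Proof. unfold f1. rewrite <- ln_1. apply ln_le; nra. Qed.

Lemma f1_le_4_root4 x : f1 x <= 4 * root4 (1 + x ^ 2).
Proof.
  pose proof (root4_ge_1 (1 + x ^ 2) ltac:(nra)) as Hs.
  pose proof (root4_pow4 (1 + x ^ 2) ltac:(nra)) as Hs4.
  set (s := root4 (1 + x ^ 2)) in *.
  unfold f1. rewrite <- Hs4, ln_pow by lra.
  assert (ln s < s).
  { rewrite <- (ln_exp s) at 2. apply ln_increasing; [lra|].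
    pose proof (exp_ineq1 s ltac:(lra)). lra. }
  simpl INR. lra.
Qed.

Lemma df1_bound x : Rabs (df1 x) * root4 (1 + x ^ 2) ^ 2 <= 2.
Proof.
  pose proof (root4_pow4 (1 + x ^ 2) ltac:(nra)) as Hs4.
  pose proof (abs_le_root4_sq x).
  assert (E : Rabs (df1 x) * (1 + x ^ 2) = 2 * Rabs x).
  { unfold df1, Rdiv.
    rewrite !Rabs_mult, Rabs_inv, (Rabs_pos_eq 2), (Rabs_pos_eq (1 + x ^ 2)) by nra.
    field. nra. }
  rewrite <- Hs4 in E.
  pose proof (root4_ge_1 (1 + x ^ 2) ltac:(nra)).
  set (s := root4 (1 + x ^ 2)) in *.
  pose proof (Rabs_pos (df1 x)). nra.
Qed.

Lemma d2f1_bound x : Rabs (d2f1 x) * root4 (1 + x ^ 2) ^ 4 <= 2.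
Proof.
  rewrite root4_pow4 by nra.
  assert (E : Rabs (d2f1 x) * (1 + x ^ 2) ^ 2 = 2 * Rabs (1 - x ^ 2)).
  { unfold d2f1, Rdiv.
    rewrite !Rabs_mult, Rabs_inv, (Rabs_pos_eq 2), (Rabs_pos_eq ((1 + x ^ 2) ^ 2)) by nra.
    field. nra. }
  assert (Rabs (1 - x ^ 2) <= 1 + x ^ 2) by (apply Rabs_le; nra).
  pose proof (Rabs_pos (d2f1 x)). nra.
Qed.

Lemma d3f1_bound x : Rabs (d3f1 x) * root4 (1 + x ^ 2) ^ 6 <= 12.
Proof.
  pose proof (root4_pow4 (1 + x ^ 2) ltac:(nra)) as Hs4.
  pose proof (abs_le_root4_sq x).
  assert (E : Rabs (d3f1 x) * (1 + x ^ 2) ^ 3 = 4 * Rabs x * Rabs (x ^ 2 - 3)).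
  { unfold d3f1, Rdiv.
    rewrite !Rabs_mult, Rabs_inv, (Rabs_pos_eq 4), (Rabs_pos_eq ((1 + x ^ 2) ^ 3)) by nra.
    field. nra. }
  assert (H3 : Rabs (x ^ 2 - 3) <= 3 * (1 + x ^ 2)) by (apply Rabs_le; nra).
  rewrite <- Hs4 in E, H3.
  pose proof (root4_ge_1 (1 + x ^ 2) ltac:(nra)).
  set (s := root4 (1 + x ^ 2)) in *. set (a := Rabs (d3f1 x)) in *.
  assert (Rabs x * Rabs (x ^ 2 - 3) <= s ^ 2 * (3 * s ^ 4))
    by (apply Rmult_le_compat; auto using Rabs_pos).
  assert (0 < s ^ 6) by (apply pow_lt; lra).
  replace ((s ^ 4) ^ 3) with (s ^ 6 * s ^ 6) in E by ring.
  nra.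
Qed.

Lemma bdry_arith (s p a1 a2 a3 : R) :
  1 <= s -> 0 <= p <= 4 * s -> 0 <= a1 -> 0 <= a2 -> 0 <= a3 ->
  a1 * s ^ 2 <= 2 -> a2 * s ^ 4 <= 2 -> a3 * s ^ 6 <= 12 ->
  (a3 * p ^ 3 + 3 * a2 * p ^ 2 * a1 + 2 * p * a1 ^ 3) * s <= 1024.
Proof.
  intros Hs Hp H1 H2 H3 B1 B2 B3.
  assert (Hp2 : p ^ 2 <= 16 * s ^ 2) by nra.
  assert (Hp3 : p ^ 3 <= 64 * s ^ 3) by nra.
  assert (s ^ 4 <= s ^ 6) by (apply Rle_pow; lia || lra).
  assert (s ^ 3 <= s ^ 6) by (apply Rle_pow; lia || lra).
  assert (s ^ 2 <= s ^ 6) by (apply Rle_pow; lia || lra).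
  assert (T3 : a3 * p ^ 3 * s <= 768).
  { assert (0 <= a3 * s) by nra.
    assert (a3 * s * p ^ 3 <= a3 * s * (64 * s ^ 3)) by (apply Rmult_le_compat_l; lra).
    nra. }
  assert (T2 : 3 * a2 * p ^ 2 * a1 * s <= 192).
  { assert (a2 * a1 * s ^ 3 <= (a2 * s ^ 4) * (a1 * s ^ 2)).
    { replace ((a2 * s ^ 4) * (a1 * s ^ 2)) with (a2 * a1 * s ^ 6) by ring.
      apply Rmult_le_compat_l; nra. }
    assert ((a2 * s ^ 4) * (a1 * s ^ 2) <= 2 * 2) by (apply Rmult_le_compat; nra).
    assert (3 * a2 * a1 * s * p ^ 2 <= 3 * a2 * a1 * s * (16 * s ^ 2))
      by (apply Rmult_le_compat_l; [repeat apply Rmult_le_pos|]; lra).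
    nra. }
  assert (T1 : 2 * p * a1 ^ 3 * s <= 64).
  { assert ((a1 * s ^ 2) ^ 3 <= 8) by (replace 8 with (2 ^ 3) by ring; apply pow_incr; nra).
    assert (a1 ^ 3 * s ^ 2 <= (a1 * s ^ 2) ^ 3).
    { replace ((a1 * s ^ 2) ^ 3) with (a1 ^ 3 * s ^ 6) by ring.
      apply Rmult_le_compat_l; [apply pow_le|]; lra. }
    assert (2 * a1 ^ 3 * s * p <= 2 * a1 ^ 3 * s * (4 * s))
      by (apply Rmult_le_compat_l; [repeat apply Rmult_le_pos; try apply pow_le|]; lra).
    nra. }
  nra.
Qed.

Lemma bdry_bound x : Rabs (bdry x) <= 1024 / root4 (1 + x ^ 2).
Proof.
  pose proof (root4_ge_1 (1 + x ^ 2) ltac:(nra)) as Hs. pose proof (f1_nonneg x) as Hf0.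
  assert (Htri : Rabs (bdry x) <=
    Rabs (d3f1 x) * f1 x ^ 3 + 3 * Rabs (d2f1 x) * f1 x ^ 2 * Rabs (df1 x)
      + 2 * f1 x * Rabs (df1 x) ^ 3).
  { unfold bdry, Rminus.
    eapply Rle_trans; [apply Rabs_triang|]. apply Rplus_le_compat.
    - eapply Rle_trans; [apply Rabs_triang|]. rewrite Rabs_Ropp, !Rabs_mult,
        <- !RPow_abs, (Rabs_pos_eq 3), (Rabs_pos_eq (f1 x)) by lra. lra.
    - rewrite !Rabs_mult, <- RPow_abs, (Rabs_pos_eq 2), (Rabs_pos_eq (f1 x)) by lra. lra. }
  apply (Rmult_le_reg_r (root4 (1 + x ^ 2))); [lra|].
  unfold Rdiv. rewrite Rmult_assoc, Rinv_l, Rmult_1_r by lra.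
  eapply Rle_trans; [apply Rmult_le_compat_r; [lra|exact Htri]|].
  apply bdry_arith; auto using Rabs_pos, df1_bound, d2f1_bound, d3f1_bound.
  split; [exact Hf0|apply f1_le_4_root4].
Qed.

Lemma is_lim_bdry : is_lim bdry p_infty 0 /\ is_lim bdry m_infty 0.
Proof. apply (is_lim_0_of_le_inv_root4 _ 1024), bdry_bound. Qed.

Definition f1_upper (x : R) : R := x * (1 + 11 * x ^ 2 + 4 * x ^ 4) / (5 * (1 + x ^ 2) ^ 2).

Definition df1_upper (x : R) : R :=
  (1 + 30 * x ^ 2 + 9 * x ^ 4 + 4 * x ^ 6) / (5 * (1 + x ^ 2) ^ 3).

Lemma is_derive_f1_upper x : is_derive f1_upper x (df1_upper x).
Proof. unfold f1_upper, df1_upper. solve_derive. Qed.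

Lemma df1_le_df1_upper x : df1 x <= df1_upper x.
Proof.
  (* The numerator 4x^6 - 10x^5 + 9x^4 - 20x^3 + 30x^2 - 10x + 1, written as a sum of
     squares via an LDL^T factorisation of a positive definite Gram matrix. *)
  assert (E : df1_upper x - df1 x =
    ((1 - 5 * x + 2 * x ^ 2 + x ^ 3 / 2) ^ 2 + (x - x ^ 2 / 2) ^ 2
      + 39 / 4 * (x ^ 2 - 8 / 13 * x ^ 3) ^ 2 + 3 / 52 * x ^ 6) / (5 * (1 + x ^ 2) ^ 3)).
  { unfold df1_upper, df1. field. pos_denominators. }
  enough (0 <= df1_upper x - df1 x) by lra.
  rewrite E. apply Rdiv_le_0_compat; [|pos_denominators].
  pose proof (pow2_ge_0 (1 - 5 * x + 2 * x ^ 2 + x ^ 3 / 2)).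
  pose proof (pow2_ge_0 (x - x ^ 2 / 2)). pose proof (pow2_ge_0 (x ^ 2 - 8 / 13 * x ^ 3)).
  pose proof (pow2_ge_0 (x ^ 3)). nra.
Qed.

Lemma f1_le_upper x : 0 <= x -> f1 x <= f1_upper x.
Proof.
  intros Hx.
  assert (H0 : f1_upper 0 - f1 0 = 0).
  { unfold f1_upper, f1. replace (1 + 0 ^ 2) with 1 by ring. rewrite ln_1. field. }
  enough (f1_upper 0 - f1 0 <= f1_upper x - f1 x) by lra.
  apply (nondecreasing_of_is_derive_nonneg (fun y => f1_upper y - f1 y)
           (fun y => df1_upper y - df1 y));
    [|intros y; pose proof (df1_le_df1_upper y); lra|exact Hx].
  intros y. apply (is_derive_minus f1_upper f1); [apply is_derive_f1_upper|apply is_derive_f1].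
Qed.

Lemma f1_sq_le_upper_sq x : f1 x ^ 2 <= f1_upper x ^ 2.
Proof.
  pose proof (f1_nonneg x).
  destruct (Rle_dec 0 x) as [Hx|Hx].
  - pose proof (f1_le_upper x Hx). nra.
  - assert (Hf : f1 (- x) = f1 x) by (unfold f1; f_equal; ring).
    assert (Hg : f1_upper (- x) = - f1_upper x) by (unfold f1_upper; field; pos_denominators).
    pose proof (f1_le_upper (- x) ltac:(lra)). rewrite Hf, Hg in H0. nra.
Qed.

Definition sq_term_upper (x : R) : R := 3 * f1_upper x ^ 2 * d2f1 x ^ 2.

Definition sq_term_upper_coefs : list R :=
  [-4581/800; 2057/400; 709/100; -4761/350; -324/175; 2088/175; -864/175].

Definition prim_sq_term_upper (x : R) : R :=
  odd_rat sq_term_upper_coefs x + 1563/800 * atan x.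

Lemma is_derive_prim_sq_term_upper x : is_derive prim_sq_term_upper x (sq_term_upper x).
Proof.
  unfold prim_sq_term_upper, sq_term_upper, sq_term_upper_coefs, odd_rat, f1_upper, d2f1.
  cbn [horner]. solve_derive.
Qed.

Definition prim_quartic_term (x : R) : R := odd_rat [-2; 28/3; -16/3] x - 2 * atan x.

Lemma is_derive_prim_quartic_term x : is_derive prim_quartic_term x (quartic_term x).
Proof.
  unfold prim_quartic_term, quartic_term, odd_rat, df1.
  cbn [horner]. solve_derive.
Qed.

Lemma sq_term_upper_coefs_bound : List.Forall (fun c => Rabs c <= 14) sq_term_upper_coefs.
Proof. unfold sq_term_upper_coefs. coefs_bounded. Qed.

Lemma prim_sq_term_upper_bound x : Rabs (prim_sq_term_upper x) <= 102.
Proof.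
  pose proof (odd_rat_bound _ _ x sq_term_upper_coefs_bound) as Hr.
  replace (INR (length sq_term_upper_coefs)) with 7 in Hr by (simpl; ring).
  assert (/ root4 (1 + x ^ 2) <= 1).
  { rewrite <- Rinv_1. apply Rinv_le_contravar; [lra|apply root4_ge_1; nra]. }
  assert (Rabs (atan x) <= 2) by (pose proof (atan_bound x); pose proof PI_4; apply Rabs_le; lra).
  unfold prim_sq_term_upper. eapply Rle_trans; [apply Rabs_triang|].
  rewrite Rabs_mult, (Rabs_pos_eq (1563/800)) by lra. unfold Rdiv in Hr. nra.
Qed.

Lemma is_lim_prim_sq_term_upper :
  is_lim prim_sq_term_upper p_infty (1563/800 * (PI / 2)) /\
  is_lim prim_sq_term_upper m_infty (1563/800 * - (PI / 2)).
Proof.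
  destruct (is_lim_odd_rat _ _ sq_term_upper_coefs_bound) as [Hp Hm].
  split; rewrite <- (Rplus_0_l (1563/800 * _)); apply is_lim_plus'; trivial;
    apply (is_lim_scal_l atan (1563/800) _ (Finite _)).
  - apply is_lim_atan_p.
  - apply is_lim_atan_m.
Qed.

Lemma is_lim_prim_quartic_term :
  is_lim prim_quartic_term p_infty (- PI) /\ is_lim prim_quartic_term m_infty PI.
Proof.
  assert (Hc : List.Forall (fun c => Rabs c <= 10) [-2; 28/3; -16/3])
    by coefs_bounded.
  destruct (is_lim_odd_rat _ _ Hc) as [Hp Hm].
  split.
  - replace (- PI) with (0 - 2 * (PI / 2)) by field.
    apply is_lim_minus'; trivial. apply (is_lim_scal_l atan 2 _ (Finite _)), is_lim_atan_p.
  - replace PI with (0 - 2 * - (PI / 2)) at 1 by field.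
    apply is_lim_minus'; trivial. apply (is_lim_scal_l atan 2 _ (Finite _)), is_lim_atan_m.
Qed.

Definition prim_integrand (x : R) : R := RInt integrand 0 x.

Lemma is_derive_prim_integrand x : is_derive prim_integrand x (integrand x).
Proof.
  apply (is_derive_RInt integrand prim_integrand 0 x); [|apply continuous_integrand].
  apply filter_forall. intros b. apply (RInt_correct (V := R_CompleteNormedModule)).
  apply (ex_RInt_continuous (V := R_CompleteNormedModule)).
  intros z _. apply continuous_integrand.
Qed.

Definition prim_sq_term (x : R) : R := prim_integrand x - bdry x - prim_quartic_term x.

Lemma is_derive_prim_sq_term x : is_derive prim_sq_term x (sq_term x).
Proof.
  replace (sq_term x) with
    (integrand x - (integrand x - sq_term x - quartic_term x) - quartic_term x) by ring.
  apply (is_derive_minus (fun y => prim_integrand y - bdry y)).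
  - apply (is_derive_minus prim_integrand bdry);
      [apply is_derive_prim_integrand|apply is_derive_bdry].
  - apply is_derive_prim_quartic_term.
Qed.

Lemma prim_sq_term_nondecreasing x y : x <= y -> prim_sq_term x <= prim_sq_term y.
Proof.
  revert x y. apply (nondecreasing_of_is_derive_nonneg _ sq_term); [apply is_derive_prim_sq_term|].
  intros t. unfold sq_term. pose proof (pow2_ge_0 (f1 t)). pose proof (pow2_ge_0 (d2f1 t)). nra.
Qed.

Lemma prim_sq_term_gap_nondecreasing x y : x <= y ->
  prim_sq_term_upper x - prim_sq_term x <= prim_sq_term_upper y - prim_sq_term y.
Proof.
  revert x y. apply (nondecreasing_of_is_derive_nonneg _ (fun t => sq_term_upper t - sq_term t)).
  - intros t. apply (is_derive_minus prim_sq_term_upper prim_sq_term);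
      [apply is_derive_prim_sq_term_upper|apply is_derive_prim_sq_term].
  - intros t. unfold sq_term, sq_term_upper.
    pose proof (f1_sq_le_upper_sq t). pose proof (pow2_ge_0 (d2f1 t)). nra.
Qed.

Lemma prim_sq_term_bound x : Rabs (prim_sq_term x - prim_sq_term 0) <= 204.
Proof.
  pose proof (prim_sq_term_upper_bound x). pose proof (prim_sq_term_upper_bound 0).
  apply Rabs_le_between in H, H0.
  apply Rabs_le. destruct (Rle_dec 0 x) as [Hx|Hx].
  - pose proof (prim_sq_term_nondecreasing 0 x Hx).
    pose proof (prim_sq_term_gap_nondecreasing 0 x Hx). lra.
  - pose proof (prim_sq_term_nondecreasing x 0 ltac:(lra)).
    pose proof (prim_sq_term_gap_nondecreasing x 0 ltac:(lra)). lra.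
Qed.

Lemma is_lim_prim_sq_term : exists lm lp : R,
  is_lim prim_sq_term m_infty lm /\ is_lim prim_sq_term p_infty lp /\
  lp - lm <= 1563/800 * PI.
Proof.
  assert (Hb : forall x, prim_sq_term 0 - 204 <= prim_sq_term x <= prim_sq_term 0 + 204)
    by (intros x; apply Rabs_le_between', prim_sq_term_bound).
  destruct (nondecreasing_is_lim_m prim_sq_term (prim_sq_term 0 - 204)) as [lm Hm];
    [apply prim_sq_term_nondecreasing|apply Hb|].
  destruct (nondecreasing_is_lim_p prim_sq_term (prim_sq_term 0 + 204)) as [lp Hp];
    [apply prim_sq_term_nondecreasing|apply Hb|].
  exists lm, lp. do 2 (split; [assumption|]).
  destruct is_lim_prim_sq_term_upper as [Kp Km].
  pose proof (nondecreasing_is_lim_le _ _ _ prim_sq_term_gap_nondecreasing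
    (is_lim_minus' _ _ _ _ _ Km Hm) (is_lim_minus' _ _ _ _ _ Kp Hp)).
  lra.
Qed.

Lemma is_lim_prim_integrand : exists lm lp : R,
  is_lim prim_integrand m_infty lm /\ is_lim prim_integrand p_infty lp /\
  lp - lm <= (1563/800 - 2) * PI.
Proof.
  destruct is_lim_prim_sq_term as [lm [lp [Hm [Hp Hle]]]].
  destruct is_lim_bdry as [Bp Bm].
  destruct is_lim_prim_quartic_term as [Ep Em].
  assert (Hsum : forall y, prim_sq_term y + bdry y + prim_quartic_term y = prim_integrand y)
    by (intros y; unfold prim_sq_term; ring).
  exists (lm + 0 + PI), (lp + 0 + - PI). repeat split.
  - apply (is_lim_ext _ _ _ _ Hsum). now apply is_lim_plus'; [apply is_lim_plus'|].
  - apply (is_lim_ext _ _ _ _ Hsum). now apply is_lim_plus'; [apply is_lim_plus'|].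
  - lra.
Qed.

Theorem lemma2p2 :
  exists v : R,
    is_RInt_gen (fun x => Derive_n f1 4 x * (f1 x) ^ 3)
      (Rbar_locally m_infty) (Rbar_locally p_infty) v
    /\ v < 0.
Proof.
  destruct is_lim_prim_integrand as [lm [lp [Hm [Hp Hle]]]].
  exists (lp - lm). split; [|pose proof PI_RGT_0; lra].
  assert (HD : forall x, Derive prim_integrand x = integrand x)
    by (intros x; apply is_derive_unique, is_derive_prim_integrand).
  apply (is_RInt_gen_ext (Derive prim_integrand)).
  - apply filter_forall. intros ab x _. now rewrite HD, Derive_n_f1_4.
  - apply is_RInt_gen_Derive; [| |exact Hm|exact Hp]; apply filter_forall; intros ab x _.
    + exists (integrand x). apply is_derive_prim_integrand.
    + apply (continuous_ext integrand); [intros t; now rewrite HD|apply continuous_integrand].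
Qed.
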